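(* The direct limit of a directed system $(G_i)_{i\in\mathbb{N}}$ of countable linear sofic groups (with group morphisms as connecting maps) is linear sofic.
   Context: A countable group is linear sofic if it admits an injective group morphism into $\prod_{k\to\omega}GL_{n_k}(\mathbb{C})/d_\omega$ for some non-principal ultrafilter $\omega$ on $\mathbb{N}$ and $n_k\to\infty$, where this is the quotient of $\prod_kGL_{n_k}(\mathbb{C})$ by $\{(a_k)_k:\lim_{k\to\omega}\rho(a_k-\mathrm{Id})=0\}$ and $\rho(a)=\operatorname{rk}(a)/n$ for $a\in M_n(\mathbb{C})$. *)

From HB Require Import structures.
From Stdlib Require Import Reals Lra ClassicalEpsilon FunctionalExtensionality.
From mathcomp Require Import all_boot all_order all_algebra.

Set Implicit Arguments.
Unset Strict Implicit.
Unset Printing Implicit Defensive.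

Record Cplx := mkC { Re : Rdefinitions.R ; Im : Rdefinitions.R }.

Lemma Cplx_ext (x y : Cplx) : Re x = Re y -> Im x = Im y -> x = y.
Proof. by case: x => a b; case: y => c d /= -> ->. Qed.

Definition Cplx_eqb (x y : Cplx) : bool :=
  if excluded_middle_informative (x = y) then true else false.

Lemma Cplx_eqP : Equality.axiom Cplx_eqb.
Proof.
move=> x y; rewrite /Cplx_eqb.
by case: excluded_middle_informative => h; constructor.
Qed.

HB.instance Definition _ := hasDecEq.Build Cplx Cplx_eqP.

Definition Cplx_find (P : pred Cplx) (_ : nat) : option Cplx :=
  match excluded_middle_informative (exists x, P x) with
  | left h => Some (proj1_sig (constructive_indefinite_description _ h))
  | right _ => None
  end.

Lemma Cplx_find_correct P n x : Cplx_find P n = Some x -> P x.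
Proof.
rewrite /Cplx_find; case: excluded_middle_informative => // h [<-].
exact: (proj2_sig (constructive_indefinite_description _ h)).
Qed.

Lemma Cplx_find_complete (P : pred Cplx) :
  (exists x, P x) -> exists n, Cplx_find P n.
Proof.
move=> h; exists 0%N; rewrite /Cplx_find.
by case: excluded_middle_informative.
Qed.

Lemma Cplx_find_ext (P Q : pred Cplx) : P =1 Q -> Cplx_find P =1 Cplx_find Q.
Proof.
move=> hPQ; have -> : P = Q by apply: functional_extensionality.
by [].
Qed.

HB.instance Definition _ :=
  hasChoice.Build Cplx Cplx_find_correct Cplx_find_complete Cplx_find_ext.

Local Open Scope R_scope.

Definition C0 : Cplx := mkC 0 0.
Definition C1 : Cplx := mkC 1 0.
Definition Cadd (x y : Cplx) : Cplx := mkC (Re x + Re y) (Im x + Im y).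
Definition Copp (x : Cplx) : Cplx := mkC (- Re x) (- Im x).
Definition Cmul (x y : Cplx) : Cplx :=
  mkC (Re x * Re y - Im x * Im y) (Re x * Im y + Im x * Re y).
Definition Cinv (x : Cplx) : Cplx :=
  mkC (Re x / (Re x * Re x + Im x * Im x))
      (- Im x / (Re x * Re x + Im x * Im x)).

Lemma CaddA : associative Cadd.
Proof. by move=> x y z; apply: Cplx_ext => /=; ring. Qed.
Lemma CaddC : commutative Cadd.
Proof. by move=> x y; apply: Cplx_ext => /=; ring. Qed.
Lemma Cadd0 : left_id C0 Cadd.
Proof. by move=> x; apply: Cplx_ext => /=; ring. Qed.
Lemma CaddN : left_inverse C0 Copp Cadd.
Proof. by move=> x; apply: Cplx_ext => /=; ring. Qed.

HB.instance Definition _ := GRing.isZmodule.Build Cplx CaddA CaddC Cadd0 CaddN.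

Lemma CmulA : associative Cmul.
Proof. by move=> x y z; apply: Cplx_ext => /=; ring. Qed.
Lemma CmulC : commutative Cmul.
Proof. by move=> x y; apply: Cplx_ext => /=; ring. Qed.
Lemma Cmul1 : left_id C1 Cmul.
Proof. by move=> x; apply: Cplx_ext => /=; ring. Qed.
Lemma CmulDl : left_distributive Cmul Cadd.
Proof. by move=> x y z; apply: Cplx_ext => /=; ring. Qed.
Lemma C1_neq0 : C1 != C0.
Proof. by apply/eqP => -[] /R1_neq_R0. Qed.

HB.instance Definition _ :=
  GRing.Zmodule_isComNzRing.Build Cplx CmulA CmulC Cmul1 CmulDl C1_neq0.

Lemma CmulV (x : Cplx) : x != 0%R -> GRing.mul (Cinv x) x = 1%R.
Proof.
case: x => a b /eqP hx.
have hn : a * a + b * b <> 0.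
  move=> h; apply: hx.
  have ha : a = 0 by nra.
  have hb : b = 0 by nra.
  by rewrite ha hb.
by apply: Cplx_ext => /=; field.
Qed.

Lemma Cinv0 : Cinv 0%R = 0%R.
Proof. by apply: Cplx_ext => /=; rewrite /Rdiv ?Ropp_0 Rmult_0_l. Qed.

HB.instance Definition _ := GRing.ComNzRing_isField.Build Cplx CmulV Cinv0.

Close Scope R_scope.
Import GRing.Theory.
Local Open Scope ring_scope.

Record group_on (T : Type) := GroupOn {
  gmul : T -> T -> T;
  gone : T;
  ginv : T -> T;
  gmulA : forall x y z, gmul x (gmul y z) = gmul (gmul x y) z;
  gmul1 : forall x, gmul gone x = x;
  gmulV : forall x, gmul (ginv x) x = gone
}.

Definition countable_type (T : Type) : Prop :=
  exists f : T -> nat, forall x y, f x = f y -> x = y.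

Definition is_group_morph (T U : Type) (gT : group_on T) (gU : group_on U)
  (f : T -> U) : Prop :=
  forall x y, f (gmul gT x y) = gmul gU (f x) (f y).

Definition nonprincipal_ultrafilter (U : (nat -> Prop) -> Prop) : Prop :=
  U (fun _ => True) /\
  ~ U (fun _ => False) /\
  (forall A B : nat -> Prop, U A -> (forall k, A k -> B k) -> U B) /\
  (forall A B : nat -> Prop, U A -> U B -> U (fun k => A k /\ B k)) /\
  (forall A : nat -> Prop, U A \/ U (fun k => ~ A k)) /\
  (forall m : nat, ~ U (fun k => k = m)).

Definition ulim0 (U : (nat -> Prop) -> Prop) (x : nat -> Rdefinitions.R) : Prop :=
  forall eps : Rdefinitions.R, Rlt 0 eps -> U (fun k => Rlt (Rabs (x k)) eps).

Definition rho (n : nat) (a : 'M[Cplx]_n) : Rdefinitions.R :=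
  Rdiv (INR (\rank a)) (INR n).

Definition tends_to_infty (n : nat -> nat) : Prop :=
  forall N : nat, exists K : nat, forall k : nat, (K <= k)%N -> (N <= n k)%N.

(* A countable group G is linear sofic if there is an injective group
   morphism G -> prod_{k -> U} GL_{n_k}(C) / d_U.  Such a morphism is given
   by a lift phi : G -> prod_k GL_{n_k}(C) (g |-> (phi g k)_k), which is
   multiplicative modulo the kernel N = {(a_k) : lim_U rho(a_k - Id) = 0}
   and injective modulo N. *)
Definition in_kernel (U : (nat -> Prop) -> Prop) (n : nat -> nat)
  (a : forall k, 'M[Cplx]_(n k)) : Prop :=
  ulim0 U (fun k => rho (a k - 1%:M)%R).

Definition linear_sofic (T : Type) (gT : group_on T) : Prop :=
  countable_type T /\
  exists (U : (nat -> Prop) -> Prop) (n : nat -> nat)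
         (phi : T -> forall k, 'M[Cplx]_(n k)),
    [/\ nonprincipal_ultrafilter U,
        tends_to_infty n,
        (forall g k, phi g k \in unitmx),
        (forall g h, in_kernel U
            (fun k => phi (gmul gT g h) k *m invmx (phi g k *m phi h k)))
      & (forall g h, g <> h ->
           ~ in_kernel U (fun k => phi g k *m invmx (phi h k)))].

Definition directed_system (G : nat -> Type) (gG : forall i, group_on (G i))
  (f : forall i j, (i <= j)%N -> G i -> G j) : Prop :=
  [/\ (forall i j (hij : (i <= j)%N), is_group_morph (gG i) (gG j) (f i j hij)),
      (forall i (hii : (i <= i)%N) x, f i i hii x = x)
    & (forall i j k (hij : (i <= j)%N) (hjk : (j <= k)%N) (hik : (i <= k)%N) x,
         f j k hjk (f i j hij x) = f i k hik x)].

Definition cocone (G : nat -> Type) (gG : forall i, group_on (G i))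
  (f : forall i j, (i <= j)%N -> G i -> G j)
  (H : Type) (gH : group_on H) (psi : forall i, G i -> H) : Prop :=
  (forall i, is_group_morph (gG i) gH (psi i)) /\
  (forall i j (hij : (i <= j)%N) x, psi j (f i j hij x) = psi i x).

Definition direct_limit (G : nat -> Type) (gG : forall i, group_on (G i))
  (f : forall i j, (i <= j)%N -> G i -> G j)
  (L : Type) (gL : group_on L) (psi : forall i, G i -> L) : Prop :=
  cocone gG f gL psi /\
  forall (H : Type) (gH : group_on H) (chi : forall i, G i -> H),
    cocone gG f gH chi ->
    (exists u : L -> H, is_group_morph gL gH u /\
        forall i x, u (psi i x) = chi i x) /\
    (forall u v : L -> H,
        is_group_morph gL gH u -> is_group_morph gL gH v ->
        (forall i x, u (psi i x) = chi i x) ->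
        (forall i x, v (psi i x) = chi i x) ->
        forall y, u y = v y).

(* L is countable, so it is enumerated as e_0, e_1, ...  For
   each k, the finitely many elements e_0, ..., e_k and their pairwise
   products lift faithfully to a single G_j (finite_stage).  A linear sofic
   witness of G_j yields one finite-dimensional matrix map which is almost
   multiplicative and separates these lifts; amplifying it by tensor powers
   (the rank estimates for Kronecker products below) makes the defect at
   most 1/(k+1) and the separation at least 1/4 (linear_sofic_approx).  The
   resulting maps L -> GL_(n_k)(C), one per level k, are a linear sofic
   witness for L along any non-principal ultrafilter (LevelFamily). *)

From Stdlib Require Import Reals Lra Classical ClassicalEpsilon.
From Stdlib Require Import FunctionalExtensionality PropExtensionality ProofIrrelevance.
From mathcomp Require Import all_boot all_algebra.
From mathcomp Require Import zify.

Set Implicit Arguments.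
Unset Strict Implicit.
Unset Printing Implicit Defensive.
Import GRing.Theory.

Local Notation cid h := (constructive_indefinite_description _ h).

Section Amplification.
Local Open Scope ring_scope.
Variable F : fieldType.

(* The matrix of the linear map M |-> A M B, acting on row-encoded matrices
   mxvec M; up to the identification of 'M_(m, n) with 'rV_(m * n) this is
   the Kronecker product of A^T and B. *)
Definition kron_mx m1 m2 n1 n2 (A : 'M[F]_(m1, m2)) (B : 'M[F]_(n1, n2))
  : 'M[F]_(m2 * n1, m1 * n2) := lin_mx (mulmxr B \o mulmx A).

Lemma kron_mx_rV m1 m2 n1 n2 (A : 'M[F]_(m1, m2)) (B : 'M[F]_(n1, n2)) u :
  u *m kron_mx A B = mxvec (A *m vec_mx u *m B).
Proof. by rewrite /kron_mx mul_rV_lin. Qed.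

Lemma kron_mx_vec m1 m2 n1 n2 (A : 'M[F]_(m1, m2)) (B : 'M[F]_(n1, n2)) M :
  mxvec M *m kron_mx A B = mxvec (A *m M *m B).
Proof. by rewrite kron_mx_rV mxvecK. Qed.

Lemma kron_mxM m1 m2 n1 n2 k1 k2 (A : 'M[F]_(m1, m2)) (B : 'M[F]_(n1, n2))
  (A' : 'M[F]_(k1, m1)) (B' : 'M[F]_(n2, k2)) :
  kron_mx A B *m kron_mx A' B' = kron_mx (A' *m A) (B *m B').
Proof. by apply/eqP/mulmxP => u; rewrite mulmxA !kron_mx_rV mxvecK !mulmxA. Qed.

Lemma kron_mx1 m n : kron_mx (1%:M : 'M[F]_m) (1%:M : 'M[F]_n) = 1%:M.
Proof.
by apply/eqP/mulmxP => u; rewrite kron_mx_rV mul1mx mulmx1 vec_mxK mulmx1.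
Qed.

Lemma kron_mxBl m1 m2 n1 n2 (A A' : 'M[F]_(m1, m2)) (B : 'M[F]_(n1, n2)) :
  kron_mx A B - kron_mx A' B = kron_mx (A - A') B.
Proof.
apply/eqP/mulmxP => u; rewrite mulmxBr !kron_mx_rV -linearB /=.
by rewrite -!mulmxBl.
Qed.

Lemma kron_mxBr m1 m2 n1 n2 (A : 'M[F]_(m1, m2)) (B B' : 'M[F]_(n1, n2)) :
  kron_mx A B - kron_mx A B' = kron_mx A (B - B').
Proof.
apply/eqP/mulmxP => u; rewrite mulmxBr !kron_mx_rV -linearB /=.
by rewrite -mulmxBr.
Qed.

Lemma rank_kron_mx m1 m2 n1 n2 (A : 'M[F]_(m1, m2)) (B : 'M[F]_(n1, n2)) :
  (\rank (kron_mx A B) <= \rank A * \rank B)%N.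
Proof.
rewrite -{1}(mulmx_base A) -{1}(mulmx_base B) -kron_mxM.
exact: leq_trans (mxrankM_maxl _ _) (rank_leq_col _).
Qed.

Lemma mxmorph_unit n p (phi : 'M[F]_n -> 'M[F]_p) (A : 'M[F]_n) :
  (forall A B, phi (A *m B) = phi A *m phi B) -> phi 1%:M = 1%:M ->
  A \in unitmx -> phi A \in unitmx /\ phi (invmx A) = invmx (phi A).
Proof.
move=> phiM phi1 uA.
have e : phi A *m phi (invmx A) = 1%:M by rewrite -phiM mulmxV.
have [uP _] := mulmx1_unit e; split=> //.
by rewrite -[LHS]mul1mx -(mulVmx uP) -mulmxA e mulmx1.
Qed.

Lemma kron_mx_unit n p (A : 'M[F]_n) (B : 'M[F]_p) :
  A \in unitmx -> B \in unitmx -> kron_mx A B \in unitmx.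
Proof.
move=> uA uB; have : kron_mx A B *m kron_mx (invmx A) (invmx B) = 1%:M.
  by rewrite kron_mxM mulVmx // mulmxV // kron_mx1.
by case/mulmx1_unit.
Qed.

Lemma rank_trmx_sub1 n (X : 'M[F]_n) : \rank (X^T - 1%:M) = \rank (X - 1%:M).
Proof. by rewrite -(mxrank_tr (X - 1%:M)) linearB /= trmx1. Qed.

Lemma rank_invmx_sub1 n (Y : 'M[F]_n) : Y \in unitmx ->
  \rank (invmx Y - 1%:M) = \rank (Y - 1%:M).
Proof.
move=> uY; have -> : invmx Y - 1%:M = (1%:M - Y) *m invmx Y.
  by rewrite mulmxBl mul1mx mulmxV.
by rewrite mxrankMfree ?row_free_unit ?unitmx_inv // -mxrank_opp opprB.
Qed.

Definition sylvester_mx n p (P : 'M[F]_n) (Q : 'M[F]_p) : 'M[F]_(n * p) :=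
  kron_mx P 1%:M - kron_mx 1%:M Q.

Lemma sylvester_mx_vec n p (P : 'M[F]_n) (Q : 'M[F]_p) M :
  mxvec M *m sylvester_mx P Q = mxvec (P *m M - M *m Q).
Proof. by rewrite mulmxBr !kron_mx_vec -linearB /= mulmx1 mul1mx. Qed.

Section SylvesterKernel.
Variables (n p : nat) (P : 'M[F]_n) (Q : 'M[F]_p).
Local Notation S := (sylvester_mx P Q).
Local Notation RQ := (kron_mx (1%:M : 'M[F]_n) Q).

(* If P M = M Q, this matrix has its columns in the column space of P and
   its rows in the row space of Q, so it lies in a space of dimension
   rank P * rank Q: right multiplication by Q maps the kernel of S there. *)
Lemma rank_ker_sylvester_image :
  (\rank (kermx S *m RQ) <= \rank P * \rank Q)%N.
Proof.
set T := kron_mx (col_base P) (row_base Q).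
apply: leq_trans (mxrankS (_ : (kermx S *m RQ <= T)%MS)) (rank_leq_row T).
apply/row_subP => i; rewrite row_mul; set w := row i (kermx S).
have /eqP : w *m S = 0 by rewrite /w -row_mul mulmx_ker row0.
rewrite -(vec_mxK w) kron_mx_vec mul1mx; set M := vec_mx w.
rewrite sylvester_mx_vec mxvec_eq0 subr_eq0 => /eqP PM.
have MQ : (M *m Q <= row_base Q)%MS.
  have -> : M *m Q = (M *m col_base Q) *m row_base Q by rewrite -mulmxA mulmx_base.
  exact: submxMl.
apply/submxP; exists (mxvec (row_base P *m M *m pinvmx (row_base Q))).
rewrite kron_mx_vec; congr mxvec.
have -> : col_base P *m (row_base P *m M *m pinvmx (row_base Q))
    = M *m Q *m pinvmx (row_base Q).
  by rewrite (mulmxA (col_base P)) (mulmxA (col_base P)) mulmx_base PM.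
by rewrite mulmxKpV.
Qed.

(* A matrix M with P M = 0 and M Q = 0 has its columns in the kernel of P
   and its rows in the left kernel of Q, whence the dimension bound
   (n - rank P) * (p - rank Q). *)
Lemma rank_ker_sylvester_cap :
  (\rank (kermx S :&: kermx RQ) <= (n - \rank P) * (p - \rank Q))%N.
Proof.
set Bk := row_base (kermx P^T); set Bq := row_base (kermx Q).
set T := kron_mx Bk^T Bq.
apply: leq_trans (mxrankS (_ : (kermx S :&: kermx RQ <= T)%MS)) _; last first.
  by apply: leq_trans (rank_leq_row T) _; rewrite /Bk /Bq !mxrank_ker mxrank_tr.
apply/row_subP => i; set w := row i _.
have /sub_kermxP wS : (w <= kermx S)%MS.
  exact: submx_trans (row_sub i _) (capmxSl _ _).
have /sub_kermxP wR : (w <= kermx RQ)%MS.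
  exact: submx_trans (row_sub i _) (capmxSr _ _).
rewrite -(vec_mxK w) in wS wR *; set M := vec_mx w.
move/eqP: wR; rewrite kron_mx_vec mxvec_eq0 mul1mx => /eqP MQ.
move/eqP: wS; rewrite sylvester_mx_vec MQ subr0 mxvec_eq0 => /eqP PM.
have hBk : (M^T <= Bk)%MS.
  by rewrite /Bk eq_row_base; apply/sub_kermxP; rewrite -trmx_mul PM trmx0.
have hBq : (M <= Bq)%MS by rewrite /Bq eq_row_base; apply/sub_kermxP.
set W := (M^T *m pinvmx Bk)^T.
have eM : M = Bk^T *m W by rewrite /W -trmx_mul mulmxKpV // trmxK.
apply/submxP; exists (mxvec (W *m pinvmx Bq)).
by rewrite kron_mx_vec; congr mxvec; rewrite -[LHS](mulmxKpV hBq) {1}eM !mulmxA.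
Qed.

(* Rank-nullity applied to right multiplication by Q on the kernel of S. *)
Lemma rank_sylvester_lower :
  (n * p <= \rank S + \rank P * \rank Q + (n - \rank P) * (p - \rank Q))%N.
Proof.
have hk := mxrank_mul_ker (kermx S) RQ; rewrite mxrank_ker in hk.
have hS : (\rank S <= n * p)%N := rank_leq_row S.
have := leq_add rank_ker_sylvester_image rank_ker_sylvester_cap.
rewrite hk; lia.
Qed.

End SylvesterKernel.

(* The key estimate: fixed vectors of X^T (x) Y come only from pairs of fixed
   vectors, up to a rank(X - 1) * rank(Y - 1) correction. *)
Lemma rank_kron_sub1_lower n p (X : 'M[F]_n) (Y : 'M[F]_p) : Y \in unitmx ->
  (n * p <= \rank (kron_mx X^T Y - 1%:M)%R
     + (n - \rank (X - 1%:M)%R) * (p - \rank (Y - 1%:M)%R)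
     + \rank (X - 1%:M)%R * \rank (Y - 1%:M)%R)%N.
Proof.
move=> uY; set P := X^T - 1%:M; set Q := invmx Y - 1%:M.
rewrite -(rank_trmx_sub1 X) -(rank_invmx_sub1 uY) -/P -/Q.
have eK : kron_mx X^T Y - 1%:M = sylvester_mx P Q *m kron_mx 1%:M Y.
  apply/eqP/mulmxP => u; rewrite -(vec_mxK u); set M := vec_mx u.
  rewrite mulmxBr mulmx1 kron_mx_vec mulmxA sylvester_mx_vec kron_mx_vec.
  rewrite -linearB /=; congr mxvec.
  rewrite /P /Q mul1mx !mulmxBl !mulmxBr mul1mx mulmx1 mulmxBl -(mulmxA M).
  by rewrite mulVmx // mulmx1 opprB addrA subrK.
have uK : kron_mx (1%:M : 'M_n) Y \in unitmx by rewrite kron_mx_unit ?unitmx1.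
rewrite eK mxrankMfree ?row_free_unit //.
by have := rank_sylvester_lower P Q; lia.
Qed.

(* The dimension q ^ m, as a fixpoint unfolding like tensor_pow below. *)
Fixpoint dimpow (q m : nat) : nat := if m is m'.+1 then (dimpow q m' * q)%N else 1%N.

Lemma dimpowE q m : dimpow q m = (q ^ m)%N.
Proof. by elim: m => //= m ->; rewrite expnSr. Qed.

(* The m-th tensor power of B (transposes interleaved to keep it a
   multiplicative map 'M_q -> 'M_(q ^ m)). *)
Fixpoint tensor_pow q (B : 'M[F]_q) m : 'M[F]_(dimpow q m) :=
  match m with 0 => 1%:M | m'.+1 => kron_mx (tensor_pow B m')^T B end.

Lemma tensor_powM q (A B : 'M[F]_q) m :
  tensor_pow (A *m B) m = tensor_pow A m *m tensor_pow B m.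
Proof.
by elim: m => [|m IH] /=; rewrite ?mulmx1 // kron_mxM IH trmx_mul.
Qed.

Lemma tensor_pow1 q m : tensor_pow (1%:M : 'M[F]_q) m = 1%:M.
Proof. by elim: m => //= m ->; rewrite trmx1 kron_mx1. Qed.

Lemma rank_tensor_pow_sub1_upper q (B : 'M[F]_q) m :
  (\rank (tensor_pow B m - 1%:M)%R * q
     <= m * dimpow q m * \rank (B - 1%:M)%R)%N.
Proof.
elim: m => [|m IH] /=; first by rewrite subrr mxrank0.
set X := tensor_pow B m.
have e : kron_mx X^T B - 1%:M = kron_mx X^T (B - 1%:M) + kron_mx (X^T - 1%:M) 1%:M.
  by rewrite -kron_mxBr -kron_mxBl kron_mx1 addrA subrK.
have h1 := rank_kron_mx X^T (B - 1%:M).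
have h2 := rank_kron_mx (X^T - 1%:M) (1%:M : 'M_q).
rewrite mxrank1 rank_trmx_sub1 in h2.
have hX := rank_leq_row X^T.
have hadd := mxrank_add (kron_mx X^T (B - 1%:M)) (kron_mx (X^T - 1%:M) 1%:M).
rewrite -e in hadd.
have hB : (\rank (kron_mx X^T (B - 1%:M)) <= dimpow q m * \rank (B - 1%:M)%R)%N.
  by apply: leq_trans h1 _; rewrite leq_mul2r hX orbT.
have := leq_mul (leq_trans hadd (leq_add hB h2)) (leqnn q).
have := leq_mul IH (leqnn q); rewrite /X; nia.
Qed.

Lemma rank_tensor_pow_sub1_lower q (B : 'M[F]_q) m : B \in unitmx ->
  (2 * \rank (B - 1%:M)%R <= q)%N ->
  (2 * (dimpow q m - \rank (tensor_pow B m - 1%:M)%R)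
     <= dimpow q m + (q - 2 * \rank (B - 1%:M)%R) ^ m)%N.
Proof.
move=> uB h2r; elim: m => [|m IH] /=; first by rewrite subrr mxrank0.
have hk := rank_kron_sub1_lower (tensor_pow B m) uB.
have he := rank_leq_row (tensor_pow B m - 1%:M).
have h := leq_mul IH (leqnn (q - 2 * \rank (B - 1%:M)%R)).
rewrite expnSr; move: hk he h h2r IH.
move: (\rank (kron_mx (tensor_pow B m)^T B - 1%:M)%R).
move: (\rank (tensor_pow B m - 1%:M)%R) (\rank (B - 1%:M)%R) => e r e' *.
nia.
Qed.

(* Padding A to diag(A, 1) halves its normalized defect, ensuring the
   hypothesis 2 rank(B - 1) <= q of the previous lemma. *)
Definition pad_mx n (A : 'M[F]_n) : 'M[F]_(n + n) := block_mx A 0 0 1%:M.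

Lemma pad_mxM n (A B : 'M[F]_n) : pad_mx (A *m B) = pad_mx A *m pad_mx B.
Proof. by rewrite /pad_mx mulmx_block !mulmx0 !mul0mx !addr0 !add0r mulmx1. Qed.

Lemma pad_mx1 n : pad_mx (1%:M : 'M[F]_n) = 1%:M.
Proof. by rewrite /pad_mx -scalar_mx_block. Qed.

Lemma rank_pad_mx_sub1 n (A : 'M[F]_n) :
  \rank (pad_mx A - 1%:M)%R = \rank (A - 1%:M)%R.
Proof.
rewrite /pad_mx [X in (_ - X)%R](scalar_mx_block n n) opp_block_mx add_block_mx.
by rewrite !oppr0 !addr0 subrr rank_diag_block_mx mxrank0 addn0.
Qed.

(* The amplification map A |-> (diag(A, 1))^(x)m: a multiplicative map that
   keeps small defects small and pushes large defects towards 1. *)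
Definition amplify n m (A : 'M[F]_n) := tensor_pow (pad_mx A) m.

Lemma amplifyM n m (A B : 'M[F]_n) :
  amplify m (A *m B) = amplify m A *m amplify m B.
Proof. by rewrite /amplify pad_mxM tensor_powM. Qed.

Lemma amplify1 n m : amplify m (1%:M : 'M[F]_n) = 1%:M.
Proof. by rewrite /amplify pad_mx1 tensor_pow1. Qed.

Lemma amplify_unit n m (A : 'M[F]_n) : A \in unitmx ->
  amplify m A \in unitmx /\ amplify m (invmx A) = invmx (amplify m A).
Proof. exact: mxmorph_unit (@amplifyM n m) (amplify1 n m). Qed.

Lemma amplify_defect n m (A : 'M[F]_n) :
  (\rank (amplify m A - 1%:M)%R * (n + n)
     <= m * dimpow (n + n) m * \rank (A - 1%:M)%R)%N.
Proof.
by rewrite -[X in (_ <= _ * X)%N]rank_pad_mx_sub1; apply: rank_tensor_pow_sub1_upper.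
Qed.
End Amplification.

Lemma bernoulli_nat a b m : (a ^ m + m * b * a ^ m.-1 <= (a + b) ^ m)%N.
Proof.
elim: m => [|m IH]; first by rewrite /= mul0n addn0.
case: m IH => [|m] IH; first by rewrite /= !expn1 expn0 !muln1 mul1n.
by have := leq_mul (leqnn (a + b)) IH; rewrite /= !expnS; nia.
Qed.

Lemma pow_sub_half n r M m : (1 <= M)%N -> (n <= r * M)%N -> (M <= m)%N ->
  (r <= n)%N -> (2 * (n - r) ^ m <= n ^ m)%N.
Proof.
move=> hM hn hm hr; have hb := bernoulli_nat (n - r) r m.
rewrite subnK // in hb.
case: m hm hb => [|m] hm hb; first by lia.
have h1 : ((n - r) ^ m.+1 <= n * (n - r) ^ m)%N.
  by rewrite expnS leq_mul2r leq_subr orbT.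
have h2 : (n * (n - r) ^ m <= m.+1 * r * (n - r) ^ m)%N.
  by rewrite leq_mul2r; apply/orP; right; have := leq_mul (leqnn r) hm; lia.
by rewrite /= in hb; lia.
Qed.

Lemma amplify_separation (F : fieldType) n m M (A : 'M[F]_n) :
  A \in unitmx -> (1 <= M)%N -> (n <= \rank (A - 1%:M)%R * M)%N -> (M <= m)%N ->
  (dimpow (n + n) m <= 4 * \rank (amplify m A - 1%:M)%R)%N.
Proof.
move=> uA hM hn hm; set r := \rank (A - 1%:M)%R.
have hr : (r <= n)%N by apply: rank_leq_row.
have uP : pad_mx A \in unitmx.
  by have [] := mxmorph_unit (@pad_mxM F n) (pad_mx1 F n) uA.
have := rank_tensor_pow_sub1_lower m uP; rewrite rank_pad_mx_sub1 -/r => hs.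
have {hs} hs := hs (_ : 2 * r <= n + n)%N.
have hh := pow_sub_half hM hn hm hr.
have he := rank_leq_row (amplify m A - 1%:M).
rewrite /amplify in he *; move: hs he hh.
move: (\rank (tensor_pow (pad_mx A) m - 1%:M)%R) => e.
rewrite dimpowE (_ : (n + n - 2 * r = 2 * (n - r))%N); last by lia.
rewrite (_ : (n + n = 2 * n)%N); last by lia.
rewrite !expnMn => h1 h2 h3; have h4 := h1 (_ : 2 * r <= 2 * n)%N.
have h5 := leq_mul (leqnn (2 ^ m)%N) h3.
move: h2 h4 h5; move: (2 ^ m)%N (n ^ m)%N ((n - r) ^ m)%N => a b c *; nia.
Qed.

Lemma amplify_defect_small (F : fieldType) n m K (A : 'M[F]_n) : (0 < n)%N ->
  (m * K * \rank (A - 1%:M)%R <= n)%N ->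
  (\rank (amplify m A - 1%:M)%R * K <= dimpow (n + n) m)%N.
Proof.
move=> hn hA; have := amplify_defect m A.
move: (\rank (amplify m A - 1%:M)%R) => e he.
have : (e * K * (n + n) <= dimpow (n + n) m * (n + n))%N by nia.
by rewrite leq_pmul2r; lia.
Qed.

Section NormalizedRank.
Local Open Scope R_scope.
Variables (r n : nat).
Hypothesis n_gt0 : (0 < n)%N.
Let INR_n_gt0 : 0 < INR n.
Proof. by apply: lt_0_INR; apply/ltP. Qed.

Lemma Rabs_ratio : Rabs (INR r / INR n) = INR r / INR n.
Proof. by apply: Rabs_pos_eq; apply: Rle_mult_inv_pos => //; apply: pos_INR. Qed.

Lemma ratio_lt_inv (L : nat) : (0 < L)%N ->
  Rabs (INR r / INR n) < / INR L -> (r * L < n)%N.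
Proof.
move=> L_gt0; rewrite Rabs_ratio => h.
have hL : 0 < INR L by apply: lt_0_INR; apply/ltP.
have : INR r * INR L < INR n.
  apply (Rmult_lt_compat_r (INR L * INR n)) in h; last exact: Rmult_lt_0_compat.
  by field_simplify in h; lra.
by rewrite -mult_INR => /INR_lt/ltP.
Qed.

Lemma ratio_not_lt (M : nat) (eps : R) : (0 < M)%N -> / INR M < eps ->
  ~ (Rabs (INR r / INR n) < eps) -> (n <= r * M)%N.
Proof.
move=> M_gt0 hM; rewrite Rabs_ratio => h.
have hM' : 0 < INR M by apply: lt_0_INR; apply/ltP.
have h1 : / INR M < INR r / INR n by lra.
have : INR n < INR r * INR M.
  apply (Rmult_lt_compat_r (INR M * INR n)) in h1; last exact: Rmult_lt_0_compat.
  by field_simplify in h1; lra.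
by rewrite -mult_INR => /INR_lt/ltP/ltnW.
Qed.

Lemma ratio_lt (L : nat) (eps : R) : (0 < L)%N -> / INR L < eps ->
  (r * L <= n)%N -> Rabs (INR r / INR n) < eps.
Proof.
move=> L_gt0 hL hr; rewrite Rabs_ratio; apply: Rle_lt_trans hL.
have hL' : 0 < INR L by apply: lt_0_INR; apply/ltP.
have h1 : INR r * INR L <= INR n by rewrite -mult_INR; apply: le_INR; apply/leP.
apply (Rmult_le_reg_r (INR n * INR L)); first exact: Rmult_lt_0_compat.
by field_simplify; lra.
Qed.

Lemma ratio_not_lt_quarter : (n <= 4 * r)%N -> ~ (Rabs (INR r / INR n) < / 4).
Proof.
move=> hr; rewrite Rabs_ratio => h.
have h1 : INR n <= 4 * INR r.
  rewrite (_ : 4 = INR 4); last by simpl; lra.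
  by rewrite -mult_INR; apply: le_INR; apply/leP.
apply (Rmult_lt_compat_r (4 * INR n)) in h; last lra.
by field_simplify in h; lra.
Qed.

End NormalizedRank.

Section Ultrafilter.
Variable U : (nat -> Prop) -> Prop.
Hypothesis hU : nonprincipal_ultrafilter U.

Lemma U_mono (A B : nat -> Prop) : U A -> (forall k, A k -> B k) -> U B.
Proof. by case: hU => _ [_ [h _]]; apply: h. Qed.

Lemma U_and (A B : nat -> Prop) : U A -> U B -> U (fun k => A k /\ B k).
Proof. by case: hU => _ [_ [_ [h _]]]; apply: h. Qed.

Lemma U_nonempty (A : nat -> Prop) : U A -> exists k, A k.
Proof.
move=> hA; apply: NNPP => hn; have [_ [h0 _]] := hU; apply: h0.
by apply: U_mono hA _ => k hk; apply: hn; exists k.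
Qed.

Lemma U_not (A : nat -> Prop) : ~ U A -> U (fun k => ~ A k).
Proof. by move=> hA; have [_ [_ [_ [_ [h _]]]]] := hU; case: (h A). Qed.

Lemma U_ge K : U (fun k => (K <= k)%N).
Proof.
elim: K => [|K IH]; first by case: hU => hT _; apply: U_mono hT _.
have hK : U (fun k => k <> K).
  by apply: U_not; have [_ [_ [_ [_ [_ h]]]]] := hU; apply: h.
apply: U_mono (U_and IH hK) _ => k [h h'].
by rewrite ltn_neqAle h andbT; apply/eqP => e; apply: h'.
Qed.

Lemma U_forall_fin (I : finType) (A : I -> nat -> Prop) :
  (forall i, U (A i)) -> U (fun k => forall i, A i k).
Proof.
move=> hA; suff : forall s : seq I, U (fun k => forall i, i \in s -> A i k).
  by move=> /(_ (enum I)) h; apply: U_mono h _ => k hk i; apply: hk; rewrite mem_enum.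
elim=> [|x s IH]; first by case: hU => hT _; apply: U_mono hT _.
apply: U_mono (U_and (hA x) IH) _ => k [h1 h2] i.
by rewrite inE => /orP[/eqP -> // | /h2].
Qed.

End Ultrafilter.

Lemma exists_bound_fin (I : finType) (P : I -> nat -> Prop) :
  (forall i M M', (M <= M')%N -> P i M -> P i M') ->
  (forall i, exists M, P i M) -> exists M, forall i, P i M.
Proof.
move=> P_mono hP; pose M i := proj1_sig (cid (hP i)).
exists (\max_i M i) => i; apply: P_mono (leq_bigmax i) _.
exact: proj2_sig (cid (hP i)).
Qed.

Section SoficApproximation.
Local Open Scope ring_scope.

Section SoficWitness.
Variables (T : Type) (gT : group_on T) (U : (nat -> Prop) -> Prop).
Hypothesis hU : nonprincipal_ultrafilter U.
Variables (nn : nat -> nat) (phi : T -> forall k, 'M[Cplx]_(nn k)).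
Hypothesis phi_mul : forall g h,
  in_kernel U (fun k => phi (gmul gT g h) k *m invmx (phi g k *m phi h k)).
Hypothesis phi_inj : forall g h, g <> h ->
  ~ in_kernel U (fun k => phi g k *m invmx (phi h k)).

Lemma sofic_defect_small g h L : (0 < L)%N ->
  U (fun k => (0 < nn k)%N ->
    (\rank (phi (gmul gT g h) k *m invmx (phi g k *m phi h k) - 1%:M)%R * L
       < nn k)%N).
Proof.
move=> L_gt0.
have hL : Rlt 0 (Rinv (INR L)) by apply/Rinv_0_lt_compat/lt_0_INR/ltP.
by apply: (U_mono hU (phi_mul g h hL)) => k hk n_gt0; apply: ratio_lt_inv hk.
Qed.

Lemma sofic_separation g h : exists M, U (fun k => g <> h -> (0 < nn k)%N ->
  (nn k <= \rank (phi g k *m invmx (phi h k) - 1%:M)%R * M)%N).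
Proof.
case: (classic (g = h)) => [-> | gh].
  by exists 0%N; case: hU => hT _; apply: (U_mono hU hT).
have [eps [eps_gt0 not_small]] : exists eps, Rlt 0 eps /\
    ~ U (fun k => Rlt (Rabs (rho (phi g k *m invmx (phi h k) - 1%:M))) eps).
  apply: NNPP => h0; apply: (phi_inj gh) => eps eps_gt0.
  by apply: NNPP => h1; apply: h0; exists eps.
have [M [hM M_gt0]] := archimed_cor1 eps eps_gt0.
exists M; apply: (U_mono hU (U_not hU not_small)) => k hk _ n_gt0.
by apply: ratio_not_lt hk => //; apply/ltP.
Qed.

End SoficWitness.

Lemma linear_sofic_level (T : Type) (gT : group_on T) : linear_sofic gT ->
  forall (I : finType) (c : I -> T) (K N : nat),
  exists n M (th : T -> 'M[Cplx]_n),
  [/\ (0 < M)%N, (N <= n)%N, (forall g, th g \in unitmx),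
      (forall i j, M * K *
         \rank (th (gmul gT (c i) (c j)) *m invmx (th (c i) *m th (c j)) - 1%:M)%R
         <= n)%N
    & (forall i j, c i <> c j ->
         n <= \rank (th (c i) *m invmx (th (c j)) - 1%:M)%R * M)%N].
Proof.
case=> _ [U [nn [phi [hU n_infty phi_unit phi_mul phi_inj]]]] I c K N.
have [M sep] := exists_bound_fin
  (P := fun (x : I * I) M => U (fun k => c x.1 <> c x.2 -> (0 < nn k)%N ->
          (nn k <= \rank (phi (c x.1) k *m invmx (phi (c x.2) k) - 1%:M)%R * M)%N))
  (fun x M M' hMM' hM => U_mono hU hM (fun k hk h1 h2 =>
     leq_trans (hk h1 h2) (leq_mul (leqnn _) hMM')))
  (fun x => sofic_separation hU phi_inj (c x.1) (c x.2)).
have defect (x : I * I) := sofic_defect_small hU phi_mul (c x.1) (c x.2)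
  (ltn0Sn (M.+1 * K)).
have [K0 hK0] := n_infty (maxn N 1).
have [k [n_ge [defect_k sep_k]]] := U_nonempty hU (U_and hU
  (U_mono hU (U_ge hU K0) hK0)
  (U_and hU (U_forall_fin hU defect) (U_forall_fin hU sep))).
move: n_ge; rewrite geq_max => /andP[N_le n_gt0].
exists (nn k), M.+1, (fun g => phi g k); split=> //.
- by move=> i j; have := defect_k (i, j) n_gt0; rewrite /=; lia.
- move=> i j cij; apply: leq_trans (sep_k (i, j) cij n_gt0) _.
  by rewrite leq_mul2l leqnSn orbT.
Qed.

Lemma linear_sofic_approx (T : Type) (gT : group_on T) : linear_sofic gT ->
  forall (I : finType) (c : I -> T) (K N : nat), exists n (th : T -> 'M[Cplx]_n),
  [/\ (N <= n)%N, (forall g, th g \in unitmx),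
      (forall i j, \rank (th (gmul gT (c i) (c j)) *m invmx (th (c i) *m th (c j))
                           - 1%:M)%R * K <= n)%N
    & (forall i j, c i <> c j ->
         n <= 4 * \rank (th (c i) *m invmx (th (c j)) - 1%:M)%R)%N].
Proof.
move=> sofic I c K N.
have [n [M [th [M_gt0 n_ge th_unit defect sep]]]] :=
  linear_sofic_level sofic c K (maxn N 1).
move: n_ge; rewrite geq_max => /andP[N_le n_gt0].
have amp_unit g := amplify_unit M (th_unit g).
exists (dimpow (n + n) M), (fun g => amplify M (th g)); split.
- rewrite dimpowE; apply: leq_trans N_le (leq_trans (leq_addr n n) _).
  by rewrite -{1}(expn1 (n + n)) leq_pexp2l // addn_gt0 n_gt0.
- by move=> g; case: (amp_unit g).
- move=> i j; rewrite -amplifyM -(amplify_unit M _).2 ?unitmx_mul ?th_unit //.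
  by rewrite -amplifyM; apply: amplify_defect_small.
- move=> i j cij; rewrite -(amp_unit _).2 -amplifyM.
  apply: amplify_separation M_gt0 (sep _ _ cij) (leqnn M).
  by rewrite unitmx_mul th_unit unitmx_inv th_unit.
Qed.
End SoficApproximation.

Section GroupFacts.
Variables (T : Type) (g : group_on T).
Local Notation "x * y" := (gmul g x y).
Local Notation "1" := (gone g).

Lemma gmulVr x : x * ginv g x = 1.
Proof.
have e : ginv g (ginv g x) * ginv g x = 1 := gmulV g _.
by rewrite -[LHS](gmul1 g) -{1}e -gmulA (gmulA g (ginv g x) x) gmulV gmul1 e.
Qed.

Lemma gmulr1 x : x * 1 = x.
Proof. by rewrite -(gmulV g x) gmulA gmulVr gmul1. Qed.

Lemma gmul_cancel a x y : a * x = a * y -> x = y.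
Proof.
by move=> e; rewrite -(gmul1 g x) -(gmul1 g y) -(gmulV g a) -!gmulA e.
Qed.
End GroupFacts.

Lemma morph1 T U (gT : group_on T) (gU : group_on U) (h : T -> U) :
  is_group_morph gT gU h -> h (gone gT) = gone gU.
Proof.
by move=> hm; apply: (@gmul_cancel _ gU (h (gone gT))); rewrite -hm gmul1 gmulr1.
Qed.

Lemma morphV T U (gT : group_on T) (gU : group_on U) (h : T -> U) x :
  is_group_morph gT gU h -> h (ginv gT x) = ginv gU (h x).
Proof.
move=> hm; apply: (@gmul_cancel _ gU (h x)).
by rewrite -hm !gmulVr (morph1 hm).
Qed.

Section Subgroup.
Variables (T : Type) (g : group_on T) (P : T -> Prop).
Hypotheses (P1 : P (gone g)) (PM : forall x y, P x -> P y -> P (gmul g x y))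
  (PV : forall x, P x -> P (ginv g x)).

Lemma sub_eq (a b : {x | P x}) : proj1_sig a = proj1_sig b -> a = b.
Proof.
by case: a => x px; case: b => y py /= e; subst y; rewrite (proof_irrelevance _ px py).
Qed.

Definition subgroup_on : group_on {x | P x}.
Proof.
refine (@GroupOn _ (fun a b => exist _ _ (PM (proj2_sig a) (proj2_sig b)))
  (exist _ _ P1) (fun a => exist _ _ (PV (proj2_sig a))) _ _ _).
- by move=> x y z; apply: sub_eq; rewrite /= gmulA.
- by move=> x; apply: sub_eq; rewrite /= gmul1.
- by move=> x; apply: sub_eq; rewrite /= gmulV.
Defined.
End Subgroup.

Section Quotient.
Variables (T : Type) (g : group_on T) (R : T -> T -> Prop).
Hypotheses (R_refl : forall s, R s s) (R_sym : forall s t, R s t -> R t s)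
  (R_trans : forall s t u, R s t -> R t u -> R s u)
  (R_mul : forall s s' t t', R s s' -> R t t' -> R (gmul g s t) (gmul g s' t'))
  (R_inv : forall s s', R s s' -> R (ginv g s) (ginv g s')).

Definition quot := {C : T -> Prop | exists s, C = R s}.
Definition class_of (s : T) : quot := exist _ (R s) (ex_intro _ s erefl).
Definition class_repr (q : quot) : T := proj1_sig (cid (proj2_sig q)).

Lemma class_of_repr q : class_of (class_repr q) = q.
Proof.
case: q => C hC; apply: sub_eq => /=.
by rewrite -(proj2_sig (cid hC)).
Qed.

Lemma class_of_eq s t : R s t -> class_of s = class_of t.
Proof.
move=> h; apply: sub_eq => /=; apply: functional_extensionality => u.
by apply: propositional_extensionality; split => [/(R_trans (R_sym h)) | /(R_trans h)].
Qed.

Lemma class_of_inj s t : class_of s = class_of t -> R s t.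
Proof.
move=> e; have : proj1_sig (class_of s) t = proj1_sig (class_of t) t by rewrite e.
by move=> /= ->.
Qed.

Lemma R_repr_class_of s : R (class_repr (class_of s)) s.
Proof. by apply: class_of_inj; rewrite class_of_repr. Qed.

Definition qmul (a b : quot) : quot :=
  class_of (gmul g (class_repr a) (class_repr b)).

Lemma class_of_mul s t : qmul (class_of s) (class_of t) = class_of (gmul g s t).
Proof. by apply: class_of_eq; apply: R_mul; apply: R_repr_class_of. Qed.

Lemma class_of_inv s :
  class_of (ginv g (class_repr (class_of s))) = class_of (ginv g s).
Proof. by apply: class_of_eq; apply: R_inv; apply: R_repr_class_of. Qed.

Definition quotient_on : group_on quot.
Proof.
refine (@GroupOn quot qmul (class_of (gone g))
  (fun a => class_of (ginv g (class_repr a))) _ _ _).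
- move=> a b c; rewrite -(class_of_repr a) -(class_of_repr b) -(class_of_repr c).
  by rewrite !class_of_mul gmulA.
- by move=> a; rewrite -(class_of_repr a) class_of_mul gmul1.
- by move=> a; rewrite -(class_of_repr a) class_of_inv class_of_mul gmulV.
Defined.

End Quotient.

Section DirectLimit.
Variables (G : nat -> Type) (gG : forall i, group_on (G i))
  (f : forall i j, (i <= j)%N -> G i -> G j).
Hypothesis hsys : directed_system gG f.
Variables (L : Type) (gL : group_on L) (psi : forall i, G i -> L).
Hypothesis hL : direct_limit gG f gL psi.
Arguments f : clear implicits.
Arguments psi : clear implicits.

Lemma f_irr i j (h h' : (i <= j)%N) x : f i j h x = f i j h' x.
Proof. by rewrite (bool_irrelevance h h'). Qed.

Lemma f_morph i j (h : (i <= j)%N) : is_group_morph (gG i) (gG j) (f i j h).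
Proof. by case: hsys => hm _ _; apply: hm. Qed.

Lemma f_comp i j k (hij : (i <= j)%N) (hjk : (j <= k)%N) (hik : (i <= k)%N) x :
  f j k hjk (f i j hij x) = f i k hik x.
Proof. by case: hsys => _ _ hc; apply: hc. Qed.

Lemma psi_morph i : is_group_morph (gG i) gL (psi i).
Proof. by case: hL => [[hm _] _]. Qed.

Lemma psi_f i j (h : (i <= j)%N) x : psi j (f i j h x) = psi i x.
Proof. by case: hL => [[_ hc] _]. Qed.

Definition in_image (y : L) : Prop := exists i x, psi i x = y.

Lemma in_image1 : in_image (gone gL).
Proof. by exists 0%N, (gone (gG 0)); rewrite (morph1 (@psi_morph 0)). Qed.

Lemma in_imageM y z : in_image y -> in_image z -> in_image (gmul gL y z).
Proof.
case=> i [x <-] [j [x' <-]].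
exists (maxn i j), (gmul (gG _) (f _ _ (leq_maxl i j) x) (f _ _ (leq_maxr i j) x')).
by rewrite psi_morph !psi_f.
Qed.

Lemma in_imageV y : in_image y -> in_image (ginv gL y).
Proof.
by case=> i [x <-]; exists i, (ginv (gG i) x); rewrite (morphV _ (@psi_morph i)).
Qed.

(* The image of the cocone is a subgroup through which psi factors; by
   uniqueness in the universal property it is all of L. *)
Lemma psi_surj y : in_image y.
Proof.
case: hL => hc huniv.
pose gS := subgroup_on in_image1 in_imageM in_imageV.
pose chi i x : {y | in_image y} :=
  exist _ (psi i x) (ex_intro _ i (ex_intro _ x erefl)).
have chi_cocone : cocone gG f gS chi.
  by split=> [i a b | i j h x]; apply: sub_eq; rewrite /= ?psi_morph ?psi_f.
have [[u [u_morph u_psi]] _] := huniv _ _ _ chi_cocone.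
have [_ u_unique] := huniv _ _ _ hc.
pose v y := proj1_sig (u y).
have v_morph : is_group_morph gL gL v by move=> a b; rewrite /v u_morph.
have <- : v y = y.
  apply: (u_unique v id v_morph (fun _ _ => erefl)) => // i x.
  by rewrite /v u_psi.
exact: proj2_sig (u y).
Qed.

Definition prod_on : group_on (forall j, G j).
Proof.
refine (@GroupOn _ (fun s t j => gmul (gG j) (s j) (t j)) (fun j => gone (gG j))
  (fun s j => ginv (gG j) (s j)) _ _ _).
all: by move=> *; apply: functional_extensionality_dep => j;
  rewrite ?gmulA ?gmul1 ?gmulV.
Defined.

Definition ev_eq (s t : forall j, G j) : Prop :=
  exists J, forall j, (J <= j)%N -> s j = t j.

Lemma ev_eq_refl s : ev_eq s s.
Proof. by exists 0%N. Qed.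

Lemma ev_eq_sym s t : ev_eq s t -> ev_eq t s.
Proof. by case=> J h; exists J => j hj; rewrite h. Qed.

Lemma ev_eq_trans s t u : ev_eq s t -> ev_eq t u -> ev_eq s u.
Proof.
case=> J1 h1 [J2 h2]; exists (maxn J1 J2) => j; rewrite geq_max => /andP[j1 j2].
by rewrite h1 ?h2.
Qed.

Lemma ev_eq_mul s s' t t' : ev_eq s s' -> ev_eq t t' ->
  ev_eq (gmul prod_on s t) (gmul prod_on s' t').
Proof.
case=> J1 h1 [J2 h2]; exists (maxn J1 J2) => j; rewrite geq_max => /andP[j1 j2].
by rewrite /= h1 ?h2.
Qed.

Lemma ev_eq_inv s s' : ev_eq s s' -> ev_eq (ginv prod_on s) (ginv prod_on s').
Proof. by case=> J h; exists J => j hj; rewrite /= h. Qed.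

Definition germ_on :=
  quotient_on ev_eq_refl ev_eq_sym ev_eq_trans ev_eq_mul ev_eq_inv.

Lemma germ_eq s t : ev_eq s t -> class_of ev_eq s = class_of ev_eq t.
Proof. exact: class_of_eq ev_eq_sym ev_eq_trans s t. Qed.

Lemma germ_mul s t :
  gmul germ_on (class_of ev_eq s) (class_of ev_eq t)
  = class_of ev_eq (gmul prod_on s t).
Proof. exact: class_of_mul ev_eq_refl ev_eq_sym ev_eq_trans ev_eq_mul s t. Qed.

Definition push i (x : G i) : forall j, G j := fun j =>
  match @idP (i <= j)%N with ReflectT h => f i j h x | ReflectF _ => gone (gG j) end.

Lemma push_le i (x : G i) j (h : (i <= j)%N) : push x j = f i j h x.
Proof.
by rewrite /push; destruct (@idP (i <= j)%N) as [h'|h']; [apply: f_irr | case: h'].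
Qed.

(* The germs of pushed sequences form a cocone; the factorisation through L
   shows that psi i a = psi i b forces a and b to merge at a finite stage. *)
Lemma psi_merge i (a b : G i) : psi i a = psi i b ->
  exists J (h : (i <= J)%N), f i J h a = f i J h b.
Proof.
move=> e; case: hL => _ huniv.
pose chi i (x : G i) := class_of ev_eq (push x).
have chi_cocone : cocone gG f germ_on chi.
  split=> [i0 x y | i0 j h x]; rewrite /chi.
    rewrite germ_mul; apply: germ_eq; exists i0 => j hj.
    by rewrite /= !(push_le _ hj) f_morph.
  apply: germ_eq; exists j => j' hj'.
  by rewrite (push_le _ hj') (push_le _ (leq_trans h hj')); apply: f_comp.
have [[u [_ u_psi]] _] := huniv _ _ _ chi_cocone.
have /(class_of_inj ev_eq_refl) [J hJ] : chi i a = chi i b by rewrite -!u_psi e.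
exists (maxn i J), (leq_maxl i J).
by rewrite -!push_le hJ // leq_maxr.
Qed.

End DirectLimit.

Lemma countable_enum (T : Type) (x0 : T) : countable_type T ->
  exists d : nat -> T, forall x, exists m, d m = x.
Proof.
case=> code code_inj.
exists (fun m => match excluded_middle_informative (exists x, code x = m) with
  | left h => proj1_sig (cid h) | right _ => x0 end) => x.
exists (code x); case: excluded_middle_informative => [h | []]; last by exists x.
exact/code_inj/(proj2_sig (cid h)).
Qed.

Lemma countable_of_enum (T : Type) (e : nat -> T) :
  (forall y, exists m, e m = y) -> countable_type T.
Proof.
move=> e_surj; exists (fun y => proj1_sig (cid (e_surj y))) => y1 y2 h.
by rewrite -(proj2_sig (cid (e_surj y1))) -(proj2_sig (cid (e_surj y2))) h.
Qed.

Local Open Scope ring_scope.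

Section LimitLevels.
Variables (G : nat -> Type) (gG : forall i, group_on (G i))
  (f : forall i j, (i <= j)%N -> G i -> G j).
Hypothesis hsys : directed_system gG f.
Hypothesis hG : forall i, linear_sofic (gG i).
Variables (L : Type) (gL : group_on L) (psi : forall i, G i -> L).
Hypothesis hL : direct_limit gG f gL psi.
Arguments f : clear implicits.
Arguments psi : clear implicits.

(* L is a countable union of images of countable groups. *)
Lemma limit_enumeration : exists e : nat -> L, forall y, exists m, e m = y.
Proof.
have d i := countable_enum (gone (gG i)) (hG i).1.
pose e m := match (unpickle m : option (nat * nat)) with
  | Some p => psi p.1 (proj1_sig (cid (d p.1)) p.2) | None => gone gL end.
exists e => y; have [i [x <-]] := psi_surj hL y.
have [m hm] := proj2_sig (cid (d i)) x.
by exists (pickle (i, m)); rewrite /e pickleK /= hm.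
Qed.

Definition short_word j k (x : 'I_k.+1 -> G j) (t : 'I_k.+1 * option 'I_k.+1) : G j :=
  if t.2 is Some b then gmul (gG j) (x t.1) (x b) else x t.1.

Lemma finite_stage (e : nat -> L) k : exists j (x : 'I_k.+1 -> G j),
  (forall a : 'I_k.+1, psi j (x a) = e a) /\
  (forall t t', psi j (short_word x t) = psi j (short_word x t') ->
     short_word x t = short_word x t').
Proof.
have lift (a : 'I_k.+1) := psi_surj hL (e a).
pose i a := proj1_sig (cid (lift a)).
pose x a : G (i a) := proj1_sig (cid (proj2_sig (cid (lift a)))).
have x_lift a : psi (i a) (x a) = e a := proj2_sig (cid (proj2_sig (cid (lift a)))).
pose j0 := \max_a i a; have i_le a : (i a <= j0)%N := leq_bigmax a.
pose x0 a := f (i a) j0 (i_le a) (x a).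
have merge (p : ('I_k.+1 * option 'I_k.+1) * ('I_k.+1 * option 'I_k.+1)) :
    exists J (h : (j0 <= J)%N),
      psi j0 (short_word x0 p.1) = psi j0 (short_word x0 p.2) ->
      f j0 J h (short_word x0 p.1) = f j0 J h (short_word x0 p.2).
  case: (classic (psi j0 (short_word x0 p.1) = psi j0 (short_word x0 p.2))) => e0.
    by have [J [h hJ]] := psi_merge hsys hL e0; exists J, h.
  by exists j0, (leqnn j0).
pose J p := proj1_sig (cid (merge p)).
pose hJ p : (j0 <= J p)%N := proj1_sig (cid (proj2_sig (cid (merge p)))).
have J_merge p := proj2_sig (cid (proj2_sig (cid (merge p)))).
pose j := maxn j0 (\max_p J p); have j0_le : (j0 <= j)%N := leq_maxl _ _.
have J_le p : (J p <= j)%N by apply: leq_trans (leq_bigmax p) (leq_maxr _ _).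
have push_word t :
    short_word (fun a => f j0 j j0_le (x0 a)) t = f j0 j j0_le (short_word x0 t).
  by case: t => a [b|] //=; rewrite (f_morph hsys).
exists j, (fun a => f j0 j j0_le (x0 a)); split=> [a | t t'].
  by rewrite (psi_f hL) /x0 (psi_f hL).
rewrite !push_word !(psi_f hL) => /(J_merge (t, t')) /= e1.
by rewrite -!(f_comp hsys (hJ (t, t')) (J_le (t, t')) j0_le) e1.
Qed.

(* It is an
   approximate representation of G j composed with a lift L -> G j that is
   correct on the e_a and on their products. *)
Lemma limit_level (e : nat -> L) k : exists n (th : L -> 'M[Cplx]_n),
  [/\ (k < n)%N, (forall y, th y \in unitmx),
      (forall a b : 'I_k.+1, \rank (th (gmul gL (e a) (e b))
           *m invmx (th (e a) *m th (e b)) - 1%:M)%R * k.+1 <= n)%N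
    & (forall a b : 'I_k.+1, e a <> e b ->
         n <= 4 * \rank (th (e a) *m invmx (th (e b)) - 1%:M)%R)%N].
Proof.
have [j [x [x_lift word_inj]]] := finite_stage e k.
have [n [th [k_lt th_unit defect sep]]] :=
  linear_sofic_approx (hG j) (short_word x) k.+1 k.+1.
pose lift y := match excluded_middle_informative
    (exists t, psi j (short_word x t) = y) with
  | left h => short_word x (proj1_sig (cid h)) | right _ => gone (gG j) end.
have lift_word t : lift (psi j (short_word x t)) = short_word x t.
  rewrite /lift; case: excluded_middle_informative => [h | []]; last by exists t.
  exact/word_inj/(proj2_sig (cid h)).
have lift_e (a : 'I_k.+1) : lift (e a) = x a by rewrite -x_lift (lift_word (a, None)).
have lift_mul (a b : 'I_k.+1) : lift (gmul gL (e a) (e b)) = gmul (gG j) (x a) (x b).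
  by rewrite -!x_lift -(psi_morph hL) (lift_word (a, Some b)).
exists n, (fun y => th (lift y)); split=> // [a b | a b eab].
  by rewrite lift_mul !lift_e; apply: (defect (a, None) (b, None)).
rewrite !lift_e; apply: (sep (a, None) (b, None)) => /= xab.
by apply: eab; rewrite -!x_lift; congr (psi j _).
Qed.
End LimitLevels.

(* A family of levels as produced by limit_level, indexed by k, is a linear
   sofic witness: fixed g, h are e_a, e_b for some a, b, and at every level
   k >= a, b the defect is <= 1/(k+1) while the separation stays >= 1/4. *)
Section LevelFamily.
Variables (L : Type) (gL : group_on L) (U : (nat -> Prop) -> Prop).
Hypothesis hU : nonprincipal_ultrafilter U.
Variables (e : nat -> L) (n : nat -> nat) (th : forall k, L -> 'M[Cplx]_(n k)).
Hypothesis e_surj : forall y, exists a, e a = y.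
Hypothesis level_dim : forall k, (k < n k)%N.
Hypothesis level_mul : forall k (a b : 'I_k.+1),
  (\rank (th k (gmul gL (e a) (e b)) *m invmx (th k (e a) *m th k (e b)) - 1%:M)%R
     * k.+1 <= n k)%N.
Hypothesis level_sep : forall k (a b : 'I_k.+1), e a <> e b ->
  (n k <= 4 * \rank (th k (e a) *m invmx (th k (e b)) - 1%:M)%R)%N.

Lemma level_family_mul g h :
  in_kernel U (fun k => th k (gmul gL g h) *m invmx (th k g *m th k h)).
Proof.
have [a <-] := e_surj g; have [b <-] := e_surj h.
move=> eps eps_gt0; have [K [hK K_gt0]] := archimed_cor1 eps eps_gt0.
apply: (U_mono hU (U_ge hU (maxn (maxn a b) K))) => k.
rewrite !geq_max => /andP[/andP[ak bk] Kk].
have := @level_mul k (inord a) (inord b); rewrite !inordK // => hab.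
apply: (ratio_lt (leq_ltn_trans (leq0n k) (level_dim k)) (introT ltP K_gt0) hK).
exact: leq_trans (leq_mul (leqnn _) (leqW Kk)) hab.
Qed.

Lemma level_family_inj g h : g <> h ->
  ~ in_kernel U (fun k => th k g *m invmx (th k h)).
Proof.
have [a <-] := e_surj g; have [b <-] := e_surj h => eab small.
have quarter_gt0 : Rlt 0 (Rinv 4) by lra.
have [k [hk]] := U_nonempty hU (U_and hU (small _ quarter_gt0) (U_ge hU (maxn a b))).
rewrite geq_max => /andP[ak bk].
have := @level_sep k (inord a) (inord b); rewrite !inordK // => /(_ eab) hab.
exact: ratio_not_lt_quarter (leq_ltn_trans (leq0n k) (level_dim k)) hab hk.
Qed.
End LevelFamily.

Theorem mainTheorem15
  (G : nat -> Type) (gG : forall i, group_on (G i))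
  (f : forall i j, (i <= j)%N -> G i -> G j)
  (hsys : directed_system gG f)
  (hG : forall i, linear_sofic (gG i))
  (L : Type) (gL : group_on L) (psi : forall i, G i -> L)
  (hL : direct_limit gG f gL psi) :
  linear_sofic gL.
Proof.
have [e e_surj] := limit_enumeration hG hL.
(* Any non-principal ultrafilter will do; take the one witnessing G 0. *)
have [_ [U [_ [_ [hU _ _ _ _]]]]] := hG 0%N.
have level k := limit_level hsys hG hL e k.
pose n k := proj1_sig (cid (level k)).
pose th k : L -> 'M[Cplx]_(n k) := proj1_sig (cid (proj2_sig (cid (level k)))).
have level_spec k := proj2_sig (cid (proj2_sig (cid (level k)))).
have level_dim k : (k < n k)%N by case: (level_spec k).
split; first exact: countable_of_enum e_surj.
exists U, n, (fun y k => th k y); split=> //.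
- by move=> N; exists N => k hk; apply: leq_trans hk (ltnW (level_dim k)).
- by move=> y k; case: (level_spec k) => _ ->.
- apply: (level_family_mul hU e_surj level_dim).
  by move=> k; case: (level_spec k).
- apply: (level_family_inj hU e_surj level_dim).
  by move=> k; case: (level_spec k).
Qed.
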